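(* Let $G$ be a finite abelian group, $K_1,K_2,K_3\leq G$ cyclic subgroups with $K_i\cap K_j=\{1\}$ for $i\neq j$, and for $i=1,2,3$ let $\psi_i:G\to\mathrm{Aut}(C_i)$ be an action of $G$ on a smooth projective curve $C_i$ of genus $\geq 2$ with $\ker\psi_i=K_i$ and $g(C_i/G)=1$, such that the diagonal action of $G$ on $C_1\times C_2\times C_3$ is free (i.e. $\Sigma_1\cap\Sigma_2\cap\Sigma_3=\{1\}$). For each $i$ fix a non-trivial element $\tilde\sigma_i\in G/K_i$ having a fixed point on $C_i$. Let $I(\tilde\sigma_1,\tilde\sigma_2,\tilde\sigma_3)=\{\chi_1\otimes\chi_2\otimes\chi_3\in I:\chi_i(\tilde\sigma_i)\neq1\text{ for } i=1,2,3\}$, let $G(\tilde\sigma_1,\tilde\sigma_2,\tilde\sigma_3)=\bigcap_{\psi\in I(\tilde\sigma_1,\tilde\sigma_2,\tilde\sigma_3)}\ker(\psi)\leq G\times G\times G$, and $\tilde G(\tilde\sigma_1,\tilde\sigma_2,\tilde\sigma_3)=G(\tilde\sigma_1,\tilde\sigma_2,\tilde\sigma_3)/K\Delta_G$, where $K=K_1\times K_2\times K_3$ and $\Delta_G$ is the diagonal of $G^3$. Then $\tilde G(\tilde\sigma_1,\tilde\sigma_2,\tilde\sigma_3)$ is either trivial or an elementary abelian $2$-group.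
   Context: $G^*$ denotes the group of characters (homomorphisms $G\to\mathbb{C}^*$). A character $\chi$ with $K_i\subseteq\ker\chi$ is viewed also as a character of $G/K_i$. $\Sigma_i=\{g\in G: g \text{ has a fixed point on } C_i\}$ (the union of the stabilizers of the $G$-action on $C_i$). A character $\chi\in G^*$ is pre-admissible for $i$ if $K_i\subseteq\ker\chi$ and $\chi(\sigma)\neq1$ for some $\sigma\in\Sigma_i$. For $\psi=\chi_1\otimes\chi_2\otimes\chi_3$ with $\chi_i\in G^*$, $\psi(\tau_1,\tau_2,\tau_3)=\chi_1(\tau_1)\chi_2(\tau_2)\chi_3(\tau_3)$ on $G^3$. $I_1$ is the set of $\chi_1\otimes\chi_2\otimes\chi_3$ with each $\chi_i$ pre-admissible for $i$ and $\chi_3=\overline{\chi_1\chi_2}$ (admissible of first kind); $I_2$ is the set of $\chi_1\otimes\chi_2\otimes\chi_3$ with exactly one $\chi_i$ trivial and the other two pre-admissible for their respective indices and complex conjugate to each other (admissible of second kind); $I=I_1\cup I_2$. An elementary abelian $2$-group is a group isomorphic to $(\mathbb{Z}/2\mathbb{Z})^k$. *)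

From HB Require Import structures.
From mathcomp Require Import all_boot all_order all_algebra all_fingroup all_solvable all_field all_character.
Set Implicit Arguments. Unset Strict Implicit. Unset Printing Implicit Defensive.
Import GRing.Theory Num.Theory.
Local Open Scope ring_scope.

(* Combinatorial (Riemann existence theorem) encoding of an action
   psi : G -> Aut(C) of a finite abelian group G on a smooth projective
   curve C with ker psi = K, g(C/G) = 1 and g(C) >= 2, together with
   the set S = Sigma of elements of G having a fixed point on C:
   G/K is generated by a, b, g_1..g_r (r >= 1) with g_j nontrivial in G/K and
   [a,b] g_1 ... g_r = 1 in G/K (i.e. g_1...g_r in K as G is abelian);
   the stabilizers are the preimages K<g_j>, so Sigma = U_j K<g_j>. *)
Definition genus1_quotient_action_data (gT : finGroupType)
    (G K : {group gT}) (S : {set gT}) : Prop :=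
  exists (r : nat) (a b : gT) (g : 'I_r -> gT),
    [/\ (0 < r)%N, a \in G, b \in G &
        (forall j, g j \in G :\: K)] /\
    [/\
        (\prod_(j < r) g j)%g \in K,
        G :=: << (K :|: [set a; b]) :|: [set g j | j : 'I_r] >>%g &
        S = \bigcup_(j < r) (K * <[g j]>)%g].

(* Characters of G (homomorphisms G -> C^* ) = linear irreducible characters. *)
Definition preadm (gT : finGroupType) (G K : {group gT}) (S : {set gT})
    (i : Iirr G) : bool :=
  [&& 'chi_i \is a linear_char, K \subset cfker 'chi_i &
      [exists s in S, 'chi_i s != 1%R]].

Definition admissible1 (gT : finGroupType) (G K1 K2 K3 : {group gT})
    (S1 S2 S3 : {set gT}) (i1 i2 i3 : Iirr G) : bool :=
  [&& preadm K1 S1 i1, preadm K2 S2 i2, preadm K3 S3 i3 &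
      'chi_i3 == (('chi_i1 * 'chi_i2)^*)%CF].

Definition admissible2 (gT : finGroupType) (G K1 K2 K3 : {group gT})
    (S1 S2 S3 : {set gT}) (i1 i2 i3 : Iirr G) : bool :=
  [|| [&& 'chi_i1 == 1%R, preadm K2 S2 i2, preadm K3 S3 i3 &
          'chi_i3 == (('chi_i2)^*)%CF],
      [&& 'chi_i2 == 1%R, preadm K1 S1 i1, preadm K3 S3 i3 &
          'chi_i3 == (('chi_i1)^*)%CF] |
      [&& 'chi_i3 == 1%R, preadm K1 S1 i1, preadm K2 S2 i2 &
          'chi_i2 == (('chi_i1)^*)%CF]].

Definition admissible (gT : finGroupType) (G K1 K2 K3 : {group gT})
    (S1 S2 S3 : {set gT}) (i1 i2 i3 : Iirr G) : bool :=
  admissible1 K1 K2 K3 S1 S2 S3 i1 i2 i3 || admissible2 K1 K2 K3 S1 S2 S3 i1 i2 i3.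

Definition Isig (gT : finGroupType) (G K1 K2 K3 : {group gT})
    (S1 S2 S3 : {set gT}) (s1 s2 s3 : gT) (i1 i2 i3 : Iirr G) : bool :=
  [&& admissible K1 K2 K3 S1 S2 S3 i1 i2 i3,
      'chi_i1 s1 != 1%R, 'chi_i2 s2 != 1%R & 'chi_i3 s3 != 1%R].

Definition psi3 (gT : finGroupType) (G : {group gT}) (i1 i2 i3 : Iirr G)
    (t : gT * gT * gT) : algC :=
  ('chi_i1 t.1.1 * 'chi_i2 t.1.2 * 'chi_i3 t.2)%R.

Definition Gsig (gT : finGroupType) (G K1 K2 K3 : {group gT})
    (S1 S2 S3 : {set gT}) (s1 s2 s3 : gT) : {set gT * gT * gT} :=
  [set t in setX (setX G G) G |
     [forall i1 : Iirr G, forall i2 : Iirr G, forall i3 : Iirr G,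
        Isig K1 K2 K3 S1 S2 S3 s1 s2 s3 i1 i2 i3 ==> (psi3 i1 i2 i3 t == 1%R)]].

Definition KDelta (gT : finGroupType) (G K1 K2 K3 : {group gT})
    : {set gT * gT * gT} :=
  (setX (setX K1 K2) K3 * [set (g, g, g) | g in G])%g.

From HB Require Import structures.
From mathcomp Require Import all_boot all_order all_algebra all_fingroup all_solvable all_field all_character.

(* Put P = G x G x G and x_i = s_i in the i-th coordinate.  Since Sigma_1, Sigma_2,
   Sigma_3 meet trivially and each s_i lies in a stabilizer K_i<g> contained in
   Sigma_i, every x_i is independent of the two others modulo K Delta_G.  Hence,
   given a linear character l of P / K Delta_G, one can multiply it by characters
   nu_i trivial at the x_j, j <> i, so that psi = l * nu_1 nu_2 nu_3 and
   psi' = l * conj(nu_1 nu_2 nu_3) are both nontrivial at every x_i.  Such characters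
   are admissible of the first kind, so both are trivial on G(s_1, s_2, s_3), and
   multiplying them shows l(t)^2 = 1 there; thus t^2 lies in K Delta_G. *)

Set Implicit Arguments.
Unset Strict Implicit.
Unset Printing Implicit Defensive.
Import GRing.Theory Num.Theory.
Local Open Scope group_scope.

Section LinearCharacters.
Variables (aT : finGroupType) (P : {group aT}).
Local Open Scope ring_scope.

Lemma cfker_lin_charE (xi : 'CF(P)) :
  xi \is a linear_char -> cfker xi = [set y in P | xi y == 1].
Proof. by move=> lxi; rewrite cfkerEchar ?lin_charW ?lin_char1. Qed.

Lemma lin_char_mul_conjC (xi : 'CF(P)) y :
  xi \is a linear_char -> y \in P -> xi y * (xi y)^* = 1.
Proof.
move=> lxi Py; have /cfunP/(_ y) := mul_conjC_lin_char lxi.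
by rewrite cfunE cfConjCE cfun1E Py.
Qed.

Lemma lin_char_separates (H : {group aT}) y :
    abelian P -> H \subset P -> y \in P -> y \notin H ->
  exists xi : 'CF(P),
    [/\ xi \is a linear_char, H \subset cfker xi & xi y != 1].
Proof.
move=> aP sHP Py notHy.
have nsHP : H <| P by rewrite -sub_abelian_normal.
have [i /andP[sHi noti]] :
    exists i, (H \subset cfker 'chi[P]_i) && (y \notin cfker 'chi_i).
  apply/existsP; apply: contraR notHy => /existsPn noi.
  rewrite -(cap_cfker_normal nsHP); apply/bigcapP=> i sHi.
  by have := noi i; rewrite sHi negbK.
have lchi : 'chi_i \is a linear_char by apply/char_abelianP.
by exists 'chi_i; rewrite cfker_lin_charE // inE Py in noti.
Qed.

Lemma lin_char_comp (gT : finGroupType) (G : {group gT}) (f : gT -> aT)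
    (phi : 'CF(P)) :
    {in G &, {morph f : u v / (u * v)%g}} -> {in G, forall u, f u \in P} ->
    phi \is a linear_char ->
  exists i : Iirr G,
    'chi_i \is a linear_char /\ {in G, forall u, 'chi_i u = phi (f u)}.
Proof.
move=> fM PfG lphi; pose fm := @Morphism _ _ G f fM.
have sfGP : fm @* G \subset P.
  by apply/subsetP=> _ /morphimP[u _ Gu ->]; apply: PfG.
have lc : cfMorph ('Res[fm @* G] phi) \is a linear_char.
  by rewrite cfMorph_lin_char ?cfRes_lin_char.
have /irrP[i Ei] := lin_char_irr lc.
exists i; rewrite -Ei; split=> // u Gu.
by rewrite cfMorphE // cfResE ?mem_morphim.
Qed.

End LinearCharacters.

Section IndependentElements.
Variables (aT : finGroupType) (P T : {group aT}) (I : finType) (x : I -> aT).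
Hypotheses (sTP : T \subset P) (Px : forall i, x i \in P).
Local Open Scope ring_scope.

Lemma lin_char_dual_basis :
    abelian P ->
    (forall i, x i \notin <<T :|: [set x j | j in [set~ i]]>>%g) ->
  forall i, exists rho : 'CF(P),
    [/\ rho \is a linear_char, T \subset cfker rho
      & forall j, (rho (x j) == 1) = (i != j)].
Proof.
move=> aP indep i.
pose H := <<T :|: [set x j | j in [set~ i]]>>%G; have sHP : H \subset P.
  rewrite gen_subG subUset sTP; apply/subsetP=> _ /imsetP[j _ ->]; exact: Px.
have [rho [lrho sHrho rho_xi]] := lin_char_separates aP sHP (Px i) (indep i).
exists rho; split=> [||j]; first by [].
  exact: subset_trans (subset_trans (subsetUl _ _) (subset_gen _)) sHrho.
have [<- | ij] := eqVneq i j; first exact: negbTE.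
suff /(subsetP sHrho) : x j \in H by rewrite cfker_lin_charE // inE => /andP[].
rewrite mem_gen // inE; apply/orP; right.
by apply/imsetP; exists j; rewrite // in_setC1 eq_sym.
Qed.

Lemma notin_gen_of_subgroup (Q : {group aT}) i :
    T \subset Q -> (forall j, j != i -> x j \in Q) -> x i \notin Q ->
  x i \notin <<T :|: [set x j | j in [set~ i]]>>%g.
Proof.
move=> sTQ xQ; apply: contra; apply/subsetP; rewrite gen_subG subUset sTQ.
by apply/subsetP=> _ /imsetP[j ji ->]; apply: xQ; rewrite -in_setC1.
Qed.

Variable t : aT.
Hypotheses (Pt : t \in P)
  (ker_t : forall phi : 'CF(P), phi \is a linear_char -> T \subset cfker phi ->
     (forall i, phi (x i) != 1) -> phi t = 1).

Lemma lin_char_sqr_eq1 (rho : I -> 'CF(P)) (l : 'CF(P)) :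
    (forall i, [/\ rho i \is a linear_char, T \subset cfker (rho i)
      & forall j, (rho i (x j) == 1) = (i != j)]) ->
    l \is a linear_char -> T \subset cfker l ->
  l t ^+ 2 = 1.
Proof.
move=> rhoP ll sTl.
pose nu i := if l (x i) == 1 then rho i else 1.
have nu_lin i : nu i \is a linear_char.
  by rewrite /nu; case: ifP => _; [case: (rhoP i) | apply: cfun1_lin_char].
have nu_ker i : T \subset cfker (nu i).
  by rewrite /nu; case: ifP => _; [case: (rhoP i) | rewrite cfker_cfun1].
have nu_off i j : i != j -> nu i (x j) = 1.
  move=> ij; rewrite /nu; case: ifP => _; last by rewrite cfun1E Px.
  by case: (rhoP i) => _ _ /(_ j); rewrite ij => /eqP.
have nu_on i : (l (x i) * nu i (x i) != 1) && (l (x i) * (nu i (x i))^* != 1).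
  rewrite /nu; have [-> | lxi] := eqVneq (l (x i)) 1; last first.
    by rewrite cfun1E Px conjC1 mulr1 lxi.
  have [_ _ /(_ i)] := rhoP i; rewrite eqxx !mul1r fmorph_eq1 andbb.
  by move/negbT.
pose m := \prod_i nu i.
have m_lin : m \is a linear_char by apply: rpred_prod.
have sTm : T \subset cfker m.
  apply: subset_trans (cfker_prod _ _ _); rewrite subsetI sTP.
  by apply/bigcapsP=> i _; apply: nu_ker.
have m_x i : m (x i) = nu i (x i).
  by rewrite prod_cfunE // (bigD1 i) //= big1 ?mulr1 // => j; apply: nu_off.
have lm_t : (l * m) t = 1.
  apply: ker_t; first by rewrite rpredM.
    by apply: subset_trans (cfker_mul l m); rewrite subsetI sTl.
  by move=> i; rewrite cfunE m_x; case/andP: (nu_on i).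
have lmc_t : (l * m^*%CF) t = 1.
  apply: ker_t; first by rewrite rpredM ?cfConjC_lin_char.
    by apply: subset_trans (cfker_mul _ _); rewrite cfker_conjC subsetI sTl.
  by move=> i; rewrite cfunE cfConjCE m_x; case/andP: (nu_on i).
rewrite cfunE in lm_t; rewrite cfunE cfConjCE in lmc_t.
transitivity (l t * m t * (l t * (m t)^*)); last by rewrite lm_t lmc_t mulr1.
by rewrite mulrACA lin_char_mul_conjC // mulr1 expr2.
Qed.

Lemma sqr_mem_of_kernels :
    abelian P ->
    (forall i, x i \notin <<T :|: [set x j | j in [set~ i]]>>%g) ->
  (t ^+ 2)%g \in T.
Proof.
move=> aP indep; have /fin_all_exists[rho rhoP] := lin_char_dual_basis aP indep.
apply/idPn=> notTt2.
have [l [ll sTl]] := lin_char_separates aP sTP (groupX 2 Pt) notTt2.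
by rewrite lin_charX // (lin_char_sqr_eq1 rhoP ll sTl) eqxx.
Qed.

End IndependentElements.

Lemma mulg_pair (aT bT : finGroupType) (a1 b1 : aT) (a2 b2 : bT) :
  (a1, a2) * (b1, b2) = (a1 * b1, a2 * b2).
Proof. by []. Qed.

Lemma abelian_setX (aT bT : finGroupType) (A : {group aT}) (B : {group bT}) :
  abelian A -> abelian B -> abelian (setX A B).
Proof.
move=> cAA cBB; apply/centsP=> [[a1 b1]] /setXP[Aa1 Bb1] [a2 b2] /setXP[Aa2 Bb2].
by rewrite /commute !mulg_pair (centsP cAA a1 Aa1 a2 Aa2) (centsP cBB b1 Bb1 b2 Bb2).
Qed.

Section TripleProduct.
Variables (gT : finGroupType) (G : {group gT}).
Hypothesis aG : abelian G.
Local Notation G3 := (setX (setX G G) G).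

Lemma diag3_group_set : group_set [set (g, g, g) | g in G].
Proof.
apply/group_setP; split; first by apply/imsetP; exists 1.
move=> _ _ /imsetP[u Gu ->] /imsetP[v Gv ->].
by apply/imsetP; exists (u * v); rewrite ?groupM.
Qed.
Canonical diag3_group := Group diag3_group_set.

Lemma KDelta_group_set (A1 A2 A3 : {group gT}) :
  A1 \subset G -> A2 \subset G -> A3 \subset G ->
  group_set (KDelta G A1 A2 A3).
Proof.
move=> sA1 sA2 sA3; change (group_set ((setX (setX A1 A2) A3)%G * diag3_group)).
apply/comm_group_setP; apply: normC.
have sDG3 : diag3_group \subset G3.
  by apply/subsetP=> _ /imsetP[g Gg ->]; rewrite !inE Gg.
apply: subset_trans (sub_abelian_norm _ sDG3); first by rewrite !setXS.
by rewrite !abelian_setX.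
Qed.

Lemma mem_KDelta (A1 A2 A3 : {group gT}) a1 a2 a3 :
  a1 \in A1 -> a2 \in A2 -> a3 \in A3 -> (a1, a2, a3) \in KDelta G A1 A2 A3.
Proof.
move=> A1a1 A2a2 A3a3; rewrite -[(a1, a2, a3)]mulg1.
by apply: mem_mulg; [rewrite !inE A1a1 A2a2 | apply/imsetP; exists 1].
Qed.

Lemma KDeltaS (A1 A2 A3 B1 B2 B3 : {group gT}) :
  A1 \subset B1 -> A2 \subset B2 -> A3 \subset B3 ->
  KDelta G A1 A2 A3 \subset KDelta G B1 B2 B3.
Proof. by move=> sAB1 sAB2 sAB3; rewrite mulSg ?setXS. Qed.

Lemma KDelta_setX_meet (A1 A2 A3 B1 B2 B3 : {group gT}) c1 c2 c3 :
    A1 \subset B1 -> A2 \subset B2 -> A3 \subset B3 ->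
    B1 :&: B2 :&: B3 \subset [1] ->
    (c1, c2, c3) \in KDelta G A1 A2 A3 ->
    c1 \in B1 -> c2 \in B2 -> c3 \in B3 ->
  [/\ c1 \in A1, c2 \in A2 & c3 \in A3].
Proof.
move=> sAB1 sAB2 sAB3 trivB.
case/mulsgP=> [[[a1 a2] a3] _ /setXP[/setXP[A1a1 A2a2] A3a3] /imsetP[g _ ->] [-> -> ->]].
have Bg (A B : {group gT}) a : A \subset B -> a \in A -> a * g \in B -> g \in B.
  by move=> sAB Aa; rewrite groupMl // (subsetP sAB).
move=> /(Bg _ _ _ sAB1 A1a1) B1g /(Bg _ _ _ sAB2 A2a2) B2g /(Bg _ _ _ sAB3 A3a3) B3g.
have /set1gP -> : g \in [1] by rewrite (subsetP trivB) // !inE B1g B2g.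
by rewrite !mulg1.
Qed.

End TripleProduct.

Section TripleCharacters.
Variables (gT : finGroupType) (G : {group gT}).
Hypothesis aG : abelian G.
Local Notation G3 := (setX (setX G G) G).
Local Open Scope ring_scope.

Lemma psi3_1 (i1 i2 i3 : Iirr G) : psi3 i1 i2 i3 1%g = 1.
Proof.
have lin := char_abelianP G aG.
by rewrite /psi3 /= !lin_char1 ?mulr1.
Qed.

Lemma psi3M (i1 i2 i3 : Iirr G) :
  {in G3 &, {morph psi3 i1 i2 i3 : t u / (t * u)%g >-> t * u}}.
Proof.
have lin := char_abelianP G aG.
move=> [[a1 a2] a3] [[b1 b2] b3] /setXP[/setXP[Ga1 Ga2] Ga3] /setXP[/setXP[Gb1 Gb2] Gb3].
by rewrite /psi3 /= !lin_charM // [RHS]mulrACA (mulrACA ('chi_i1 a1)).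
Qed.

Lemma Gsig_group_set (K1 K2 K3 : {group gT}) (S1 S2 S3 : {set gT}) s1 s2 s3 :
  group_set (Gsig G K1 K2 K3 S1 S2 S3 s1 s2 s3).
Proof.
apply/group_setP; split.
  rewrite inE group1; apply/forallP=> i1; apply/forallP=> i2; apply/forallP=> i3.
  by rewrite psi3_1 eqxx implybT.
move=> t u /setIdP[G3t /forallP kt] /setIdP[G3u /forallP ku].
rewrite inE groupM //; apply/forallP=> i1; apply/forallP=> i2; apply/forallP=> i3.
apply/implyP=> I_i.
have /forallP/(_ i2)/forallP/(_ i3)/implyP/(_ I_i)/eqP := kt i1.
have /forallP/(_ i2)/forallP/(_ i3)/implyP/(_ I_i)/eqP := ku i1.
by rewrite psi3M // => -> ->; rewrite mulr1.
Qed.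

Lemma lin_char_setX3_tensor (phi : 'CF(G3)) :
    phi \is a linear_char ->
  exists i1 i2 i3 : Iirr G, {in G3, forall t, psi3 i1 i2 i3 t = phi t}.
Proof.
move=> lphi.
have restrict (f : gT -> gT * gT * gT) :
    {in G &, {morph f : u v / (u * v)%g}} -> {in G, forall u, f u \in G3} ->
  exists i : Iirr G, {in G, forall u, 'chi_i u = phi (f u)}.
  by move=> fM G3f; have [i [_ chiE]] := lin_char_comp fM G3f lphi; exists i.
have [i1 chi1E] : exists i : Iirr G, {in G, forall u, 'chi_i u = phi (u, 1, 1)%g}.
  by apply: restrict => [u v _ _ | u Gu]; rewrite ?mulg_pair ?mulg1 // !inE Gu group1.
have [i2 chi2E] : exists i : Iirr G, {in G, forall u, 'chi_i u = phi (1, u, 1)%g}.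
  by apply: restrict => [u v _ _ | u Gu]; rewrite ?mulg_pair ?mulg1 // !inE Gu group1.
have [i3 chi3E] : exists i : Iirr G, {in G, forall u, 'chi_i u = phi (1, 1, u)%g}.
  by apply: restrict => [u v _ _ | u Gu]; rewrite ?mulg_pair ?mulg1 // !inE Gu group1.
exists i1, i2, i3 => -[[a1 a2] a3] /setXP[/setXP[Ga1 Ga2] Ga3].
rewrite /psi3 /= chi1E // chi2E // chi3E // -!(lin_charM lphi).
all: by rewrite ?mulg_pair ?mulg1 ?mul1g // !inE /= ?Ga1 ?Ga2 ?Ga3 ?group1.
Qed.

Lemma KDelta_lin_char_tensor (K1 K2 K3 : {group gT}) (phi : 'CF(G3)) :
    K1 \subset G -> K2 \subset G -> K3 \subset G ->
    phi \is a linear_char -> KDelta G K1 K2 K3 \subset cfker phi ->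
  exists i1 i2 i3 : Iirr G,
    [/\ [/\ K1 \subset cfker 'chi_i1, K2 \subset cfker 'chi_i2
           & K3 \subset cfker 'chi_i3],
        'chi_i3 = ('chi_i1 * 'chi_i2)^*%CF
      & {in G3, forall t, psi3 i1 i2 i3 t = phi t}].
Proof.
move=> sK1G sK2G sK3G lphi sKDphi.
have lin := char_abelianP G aG.
have [i1 [i2 [i3 psiE]]] := lin_char_setX3_tensor lphi.
have G3P a1 a2 a3 : a1 \in G -> a2 \in G -> a3 \in G -> (a1, a2, a3)%g \in G3.
  by move=> Ga1 Ga2 Ga3; rewrite !inE Ga1 Ga2 Ga3.
have psiKD a1 a2 a3 :
    a1 \in K1 -> a2 \in K2 -> a3 \in K3 -> psi3 i1 i2 i3 (a1, a2, a3)%g = 1.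
  move=> K1a1 K2a2 K3a3; have KDa := mem_KDelta G K1a1 K2a2 K3a3.
  rewrite psiE ?(cfker1 (subsetP sKDphi _ KDa)) ?lin_char1 //.
  by apply: G3P; [apply: (subsetP sK1G) | apply: (subsetP sK2G) | apply: (subsetP sK3G)].
exists i1, i2, i3; split=> //.
  split; apply/subsetP=> k Kk; rewrite cfker_lin_charE // inE.
  - by rewrite (subsetP sK1G) //= -(psiKD k 1%g 1%g) // /psi3 /= !lin_char1 ?mulr1.
  - by rewrite (subsetP sK2G) //= -(psiKD 1%g k 1%g) // /psi3 /= !lin_char1 ?mulr1 ?mul1r.
  - by rewrite (subsetP sK3G) //= -(psiKD 1%g 1%g k) // /psi3 /= !lin_char1 ?mul1r.
apply/cfunP=> u; rewrite cfConjCE cfunE.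
have [Gu | notGu] := boolP (u \in G); last first.
  by rewrite !cfun0 ?mul0r ?conjC0.
have KDu : (u, u, u)%g \in KDelta G K1 K2 K3.
  rewrite -[(u, u, u)%g]mul1g; apply: mem_mulg; first by rewrite !inE !group1.
  by apply/imsetP; exists u.
have := cfkerMr ((u^-1, u^-1, 1)%g) (subsetP sKDphi _ KDu).
rewrite !mulg_pair !mulVg mul1g -!psiE ?G3P ?groupV ?group1 // /psi3 /=.
rewrite !(lin_char1 (lin _)) !mul1r mulr1 => ->.
by rewrite !lin_charV_conj // rmorphM.
Qed.

End TripleCharacters.

Section FirstKind.
Variables (gT : finGroupType) (G K1 K2 K3 : {group gT}) (S1 S2 S3 : {set gT}).
Variables (s1 s2 s3 : gT).
Hypotheses (aG : abelian G) (sK1G : K1 \subset G) (sK2G : K2 \subset G)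
  (sK3G : K3 \subset G).
Hypotheses (S1s1 : s1 \in S1) (S2s2 : s2 \in S2) (S3s3 : s3 \in S3).
Hypotheses (Gs1 : s1 \in G) (Gs2 : s2 \in G) (Gs3 : s3 \in G).
Local Notation G3 := (setX (setX G G) G).
Local Open Scope ring_scope.

Lemma lin_char_Gsig_eq1 (phi : 'CF(G3)) t :
    phi \is a linear_char -> KDelta G K1 K2 K3 \subset cfker phi ->
    phi (s1, 1, 1)%g != 1 -> phi (1, s2, 1)%g != 1 -> phi (1, 1, s3)%g != 1 ->
  t \in Gsig G K1 K2 K3 S1 S2 S3 s1 s2 s3 -> phi t = 1.
Proof.
move=> lphi sKDphi phi_s1 phi_s2 phi_s3 /setIdP[G3t /forallP kt].
have lin := char_abelianP G aG.
have [i1 [i2 [i3 [[sK1i1 sK2i2 sK3i3] chi3E psiE]]]] :=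
  KDelta_lin_char_tensor aG sK1G sK2G sK3G lphi sKDphi.
have chi1E : 'chi_i1 s1 = phi (s1, 1, 1)%g.
  by rewrite -psiE ?inE ?Gs1 ?group1 // /psi3 /= !(lin_char1 (lin _)) !mulr1.
have chi2E : 'chi_i2 s2 = phi (1, s2, 1)%g.
  by rewrite -psiE ?inE ?Gs2 ?group1 // /psi3 /= !(lin_char1 (lin _)) mulr1 mul1r.
have chi3E' : 'chi_i3 s3 = phi (1, 1, s3)%g.
  by rewrite -psiE ?inE ?Gs3 ?group1 // /psi3 /= !(lin_char1 (lin _)) !mul1r.
rewrite -psiE //; apply/eqP.
have /forallP/(_ i2)/forallP/(_ i3)/implyP := kt i1; apply.
rewrite /Isig chi1E chi2E chi3E' phi_s1 phi_s2 phi_s3 !andbT.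
apply/orP; left; rewrite /admissible1 /preadm !lin sK1i1 sK2i2 sK3i3 -chi3E eqxx /=.
rewrite andbT; apply/and3P; split; apply/existsP.
- by exists s1; rewrite S1s1 chi1E.
- by exists s2; rewrite S2s2 chi2E.
- by exists s3; rewrite S3s3 chi3E'.
Qed.

End FirstKind.

Lemma genus1_data_mem_subgroup (gT : finGroupType) (G K : {group gT}) S s :
    abelian G -> K \subset G -> genus1_quotient_action_data G K S -> s \in S ->
  exists B : {group gT}, [/\ K \subset B, s \in B, B \subset S & B \subset G].
Proof.
move=> aG sKG [r [a [b [g [[_ _ _ gG] [_ _ ->]]]]]] /bigcupP[j _ Bs].
have Ggj : g j \in G by case/setDP: (gG j).
have cKg : commute K <[g j]>.
  by apply: normC; apply: subset_trans sKG (sub_abelian_norm aG _); rewrite cycle_subG.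
exists (K <*> <[g j]>)%G; rewrite /= comm_joingE //; split=> //.
- exact: mulg_subl.
- exact: (bigcup_sup j).
- by rewrite mul_subG // cycle_subG.
Qed.

Definition coord3 (gT : finGroupType) (s1 s2 s3 : gT) (i : 'I_3) : gT * gT * gT :=
  nth 1 [:: (s1, 1, 1); (1, s2, 1); (1, 1, s3)] i.

Section CoordinateIndependence.
Variables (gT : finGroupType) (G K1 K2 K3 B1 B2 B3 : {group gT}) (s1 s2 s3 : gT).
Hypotheses (aG : abelian G) (sB1G : B1 \subset G) (sB2G : B2 \subset G)
  (sB3G : B3 \subset G).
Hypotheses (sK1B1 : K1 \subset B1) (sK2B2 : K2 \subset B2) (sK3B3 : K3 \subset B3).
Hypotheses (B1s1 : s1 \in B1) (B2s2 : s2 \in B2) (B3s3 : s3 \in B3).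
Hypotheses (K1'1 : s1 \notin K1) (K2'2 : s2 \notin K2) (K3'3 : s3 \notin K3).
Hypothesis trivB : B1 :&: B2 :&: B3 \subset [1].

(* The i-th witness subgroup replaces K_j by B_j for j <> i: it contains
   K Delta_G and the other coordinate elements, and KDelta_setX_meet keeps
   coord3 i out of it. *)
Lemma coord3_independent i :
  coord3 s1 s2 s3 i \notin
    <<KDelta G K1 K2 K3 :|: [set coord3 s1 s2 s3 j | j in [set~ i]]>>.
Proof.
pose KDelta_group A1 A2 A3 sA1 sA2 sA3 :=
  Group (@KDelta_group_set _ G aG A1 A2 A3 sA1 sA2 sA3).
have sK1G := subset_trans sK1B1 sB1G; have sK2G := subset_trans sK2B2 sB2G.
have sK3G := subset_trans sK3B3 sB3G.
pose T := KDelta_group _ _ _ sK1G sK2G sK3G.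
case: i => [[|[|[|//]]] i3].
- apply: (@notin_gen_of_subgroup _ T _ _ (KDelta_group _ _ _ sK1G sB2G sB3G)).
  + exact: KDeltaS.
  + by move=> [[|[|[|//]]] ?] //= _; apply: mem_KDelta; rewrite ?group1.
  rewrite /coord3 /=; apply: contra K1'1 => KDx.
  by have [] := KDelta_setX_meet sK1B1 (subxx B2) (subxx B3) trivB KDx B1s1
    (group1 _) (group1 _).
- apply: (@notin_gen_of_subgroup _ T _ _ (KDelta_group _ _ _ sB1G sK2G sB3G)).
  + exact: KDeltaS.
  + by move=> [[|[|[|//]]] ?] //= _; apply: mem_KDelta; rewrite ?group1.
  rewrite /coord3 /=; apply: contra K2'2 => KDx.
  by have [] := KDelta_setX_meet (subxx B1) sK2B2 (subxx B3) trivB KDx (group1 _) B2s2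
    (group1 _).
- apply: (@notin_gen_of_subgroup _ T _ _ (KDelta_group _ _ _ sB1G sB2G sK3G)).
  + exact: KDeltaS.
  + by move=> [[|[|[|//]]] ?] //= _; apply: mem_KDelta; rewrite ?group1.
  rewrite /coord3 /=; apply: contra K3'3 => KDx.
  by have [] := KDelta_setX_meet (subxx B1) (subxx B2) sK3B3 trivB KDx (group1 _) (group1 _)
    B3s3.
Qed.

End CoordinateIndependence.

Section GenusOneActions.
Variables (gT : finGroupType) (G K1 K2 K3 : {group gT}) (S1 S2 S3 : {set gT}).
Variables (s1 s2 s3 : gT).
Hypotheses (aG : abelian G) (sK1G : K1 \subset G) (sK2G : K2 \subset G)
  (sK3G : K3 \subset G).
Hypotheses (data1 : genus1_quotient_action_data G K1 S1)
  (data2 : genus1_quotient_action_data G K2 S2)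
  (data3 : genus1_quotient_action_data G K3 S3).
Hypothesis free : S1 :&: S2 :&: S3 = 1.
Hypotheses (s1P : s1 \in S1 :\: K1) (s2P : s2 \in S2 :\: K2) (s3P : s3 \in S3 :\: K3).

Lemma Gsig_sqr_mem_KDelta t :
  t \in Gsig G K1 K2 K3 S1 S2 S3 s1 s2 s3 -> t ^+ 2 \in KDelta G K1 K2 K3.
Proof.
move=> Gsig_t; have /setIdP[G3t _] := Gsig_t.
case/setDP: s1P => S1s1 K1'1; case/setDP: s2P => S2s2 K2'2; case/setDP: s3P => S3s3 K3'3.
have [B1 [sK1B1 B1s1 sB1S1 sB1G]] := genus1_data_mem_subgroup aG sK1G data1 S1s1.
have [B2 [sK2B2 B2s2 sB2S2 sB2G]] := genus1_data_mem_subgroup aG sK2G data2 S2s2.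
have [B3 [sK3B3 B3s3 sB3S3 sB3G]] := genus1_data_mem_subgroup aG sK3G data3 S3s3.
have trivB : B1 :&: B2 :&: B3 \subset [1] by rewrite -free !setISS.
have Gs1 := subsetP sB1G _ B1s1; have Gs2 := subsetP sB2G _ B2s2.
have Gs3 := subsetP sB3G _ B3s3.
pose KD := Group (KDelta_group_set aG sK1G sK2G sK3G).
apply: (@sqr_mem_of_kernels _ (setX (setX G G) G)%G KD _ (coord3 s1 s2 s3)).
- rewrite /= /KDelta mul_subG ?setXS //.
  by apply/subsetP=> _ /imsetP[g Gg ->]; rewrite !inE Gg.
- by move=> [[|[|[|//]]] ?]; rewrite !inE /= ?Gs1 ?Gs2 ?Gs3 ?group1.
- done.
- move=> phi lphi sKDphi phi_x; apply: (lin_char_Gsig_eq1 aG sK1G sK2G sK3G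
    S1s1 S2s2 S3s3 Gs1 Gs2 Gs3 lphi sKDphi _ _ _ Gsig_t).
  + exact: (phi_x (@Ordinal 3 0 isT)).
  + exact: (phi_x (@Ordinal 3 1 isT)).
  + exact: (phi_x (@Ordinal 3 2 isT)).
- by rewrite !abelian_setX.
exact: (coord3_independent aG sB1G sB2G sB3G sK1B1 sK2B2 sK3B3 B1s1 B2s2 B3s3
  K1'1 K2'2 K3'3 trivB).
Qed.

End GenusOneActions.

Theorem proposition4p11 (gT : finGroupType) (G K1 K2 K3 : {group gT})
    (S1 S2 S3 : {set gT}) (s1 s2 s3 : gT) :
  abelian G ->
  K1 \subset G -> K2 \subset G -> K3 \subset G ->
  cyclic K1 -> cyclic K2 -> cyclic K3 ->
  K1 :&: K2 = 1 -> K1 :&: K3 = 1 -> K2 :&: K3 = 1 ->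
  genus1_quotient_action_data G K1 S1 ->
  genus1_quotient_action_data G K2 S2 ->
  genus1_quotient_action_data G K3 S3 ->
  S1 :&: S2 :&: S3 = 1 ->
  s1 \in S1 :\: K1 -> s2 \in S2 :\: K2 -> s3 \in S3 :\: K3 ->
  2.-abelem (Gsig G K1 K2 K3 S1 S2 S3 s1 s2 s3 / KDelta G K1 K2 K3).
Proof.
move=> aG sK1G sK2G sK3G _ _ _ _ _ _ data1 data2 data3 free s1P s2P s3P.
pose KD := Group (KDelta_group_set aG sK1G sK2G sK3G).
pose GS := Group (Gsig_group_set aG K1 K2 K3 S1 S2 S3 s1 s2 s3).
change (2.-abelem (GS / KD)); apply/abelemP=> //; split.
  apply/quotient_abelian/(abelianS _ (abelian_setX (abelian_setX aG aG) aG)).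
  by apply/subsetP=> t /setIdP[].
move=> _ /morphimP[t Nt GSt ->]; rewrite -morphX //; apply: coset_id.
exact: (Gsig_sqr_mem_KDelta aG sK1G sK2G sK3G data1 data2 data3 free s1P s2P s3P).
Qed.
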